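(* Let $M$ be an entrywise nonnegative $m\times n$ real matrix and $r$ a positive integer. Then $\mathrm{rank}^+(M)\le r$ if and only if there exist integers $0\le s,t\le r$, sets $U\subseteq[m]$ with $|U|=s$ and $V\subseteq[n]$ with $|V|=t$, positive integers $p\le\binom rs$ and $q\le\binom rt$, and real matrices $B_1,\dots,B_p$ (each $r\times s$) and $C_1,\dots,C_q$ (each $t\times r$) for which the test $\mathbb P$ outputs PASS.
   Context: $\mathrm{rank}^+(M)$ is the smallest $r$ with $M=AW$, $A\in\mathbb{R}_{\ge0}^{m\times r}$, $W\in\mathbb{R}_{\ge0}^{r\times n}$. Notation: $M_i$ is the $i$-th column, $M^j$ the $j$-th row, $M_i^U\in\mathbb{R}^s$ the entries of column $i$ in rows $U$, $M^j_V\in\mathbb{R}^{1\times t}$ the entries of row $j$ in columns $V$. Support of a vector = set of indices of nonzero entries. Lexicographic ordering on subsets of $[r]$: if $|S|<|T|$ then $S$ precedes $T$; equal-size subsets compared by standard lexicographic order. For a finite collection $\mathcal S$ of vectors, $\mathrm{first}(\mathcal S)$ is the vector with lexicographically minimal support among all entrywise nonnegative vectors in $\mathcal S$; it is FAIL if $\mathcal S$ contains no nonnegative vector or if two or more distinct nonnegative vectors tie for the lexicographically earliest support. The test $\mathbb P$: for each $i\in[n]$ set $W_i=\mathrm{first}(\{B_1M_i^U,\dots,B_pM_i^U\})$ and for each $j\in[m]$ set $A^j=\mathrm{first}(\{M^j_VC_1,\dots,M^j_VC_q\})$; $\mathbb P$ outputs PASS iff none of these is FAIL and $A^jW_i=M^j_i$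 for all $i,j$ (otherwise it outputs FAIL). *)

From mathcomp Require Import all_boot all_order all_algebra.
From mathcomp Require Import boolp reals.
Set Implicit Arguments. Unset Strict Implicit. Unset Printing Implicit Defensive.
Import Order.TTheory GRing.Theory Num.Theory.
Local Open Scope ring_scope.

Section Defs.
Variable R : realType.

Definition nonnegmx (a b : nat) (A : 'M[R]_(a, b)) : bool :=
  [forall i, [forall j, 0 <= A i j]].

Definition nnfact (m n : nat) (M : 'M[R]_(m, n)) (k : nat) : Prop :=
  exists (A : 'M[R]_(m, k)) (W : 'M[R]_(k, n)),
    [/\ nonnegmx A, nonnegmx W & M = A *m W].

Lemma nnfact_ex (m n : nat) (M : 'M[R]_(m, n)) :
  nonnegmx M -> exists k, `[< nnfact M k >].
Proof.
move=> HM; exists n; apply/asboolP; exists M, 1%:M; split => //; last by rewrite mulmx1.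
by apply/forallP => i; apply/forallP => j; rewrite !mxE ler0n.
Qed.

Definition nnrank (m n : nat) (M : 'M[R]_(m, n)) (HM : nonnegmx M) : nat :=
  ex_minn (nnfact_ex HM).

Definition csupp (r : nat) (v : 'cV[R]_r) : {set 'I_r} := [set k | v k 0 != 0].
Definition rsupp (r : nat) (v : 'rV[R]_r) : {set 'I_r} := [set k | v 0 k != 0].

End Defs.

Fixpoint seq_lexlt (s t : seq nat) : bool :=
  match s, t with
  | [::], [::] => false
  | [::], _ :: _ => true
  | _ :: _, [::] => false
  | x :: s', y :: t' => (x < y)%N || ((x == y) && seq_lexlt s' t')
  end.

Definition set_lexlt (r : nat) (S T : {set 'I_r}) : bool :=
  (#|S| < #|T|)%N ||
  ((#|S| == #|T|) && seq_lexlt (map val (enum S)) (map val (enum T))).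

(* first(S): Some v if v is the unique nonnegative member of S whose support is
   lexicographically minimal among nonnegative members; None (= FAIL) if S has
   no nonnegative member or two distinct nonnegative members tie. *)
Definition firstv (T : eqType) (r : nat) (nonneg : T -> bool)
    (supp : T -> {set 'I_r}) (S : seq T) : option T :=
  ohead [seq v <- S | nonneg v &&
           all (fun w => ~~ nonneg w || (w == v) || set_lexlt (supp v) (supp w)) S].

Section Test.
Variable R : realType.
Variables (m n r : nat) (M : 'M[R]_(m, n)) (U : {set 'I_m}) (V : {set 'I_n}).

(* M_i^U in R^{|U|} (rows of U in increasing order), M^j_V in R^{1 x |V|} *)
Definition colU (i : 'I_n) : 'cV[R]_#|U| := \col_(k < #|U|) M (enum_val k) i.
Definition rowV (j : 'I_m) : 'rV[R]_#|V| := \row_(k < #|V|) M j (enum_val k).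

Variables (p q : nat) (B : 'I_p -> 'M[R]_(r, #|U|)) (C : 'I_q -> 'M[R]_(#|V|, r)).

Definition Wcol (i : 'I_n) : option 'cV[R]_r :=
  firstv (@nonnegmx R r 1) (@csupp R r) [seq B k *m colU i | k <- enum 'I_p].
Definition Arow (j : 'I_m) : option 'rV[R]_r :=
  firstv (@nonnegmx R 1 r) (@rsupp R r) [seq rowV j *m C l | l <- enum 'I_q].

Definition testP : bool :=
  [forall i, Wcol i != None] && [forall j, Arow j != None] &&
  [forall i, [forall j,
     match Arow j, Wcol i with
     | Some a, Some w => (a *m w) 0 0 == M j i
     | _, _ => false
     end]].
End Test.

From mathcomp Require Import all_boot all_order all_algebra.
From mathcomp Require Import boolp reals.
Set Implicit Arguments. Unset Strict Implicit. Unset Printing Implicit Defensive.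
Import Order.TTheory GRing.Theory Num.Theory.
Local Open Scope ring_scope.

(* (<=) The vectors selected by a passing test are nonnegative and multiply to M, so they
   form a nonnegative factorization of inner dimension r.
   (=>) Write M = A W with inner dimension r and let U index a maximal set of independent
   rows of A, so that K := A_U has full row rank s <= r and A = Z K. Each column W_i is a
   nonnegative solution of K w = M_i^U; the Caratheodory argument of linear programming
   turns it into a nonnegative basic solution B_T M_i^U, where T runs over the at most
   binom(r, s) column bases of K and B_T is the right inverse of K supported on T. Two
   solutions supported in one basis coincide, so among the nonnegative basic solutions the
   one of lexicographically least support is unique; these columns W' still satisfy
   M = A W'. The same argument applied to M^T = W'^T A^T produces the rows. *)

Lemma seq_lexlt_asym s t : seq_lexlt s t -> seq_lexlt t s = false.
Proof.
elim: s t => [|x s IH] [|y t] //= /orP[xy|/andP[/eqP-> st]].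
  by rewrite ltnNge (ltnW xy) eq_sym (ltn_eqF xy).
by rewrite ltnn eqxx IH.
Qed.

Lemma seq_lexlt_trans s t u : seq_lexlt s t -> seq_lexlt t u -> seq_lexlt s u.
Proof.
elim: s t u => [|x s IH] [|y t] [|z u] //=.
move=> /orP[xy|/andP[/eqP-> st]] /orP[yz|/andP[/eqP<- tu]].
- by rewrite (ltn_trans xy yz).
- by rewrite xy.
- by rewrite yz.
- by rewrite eqxx (IH _ _ st tu) orbT.
Qed.

Lemma seq_lexlt_total s t : s != t -> seq_lexlt s t || seq_lexlt t s.
Proof.
elim: s t => [|x s IH] [|y t] //= ne.
case: (ltngtP x y) => //= exy; apply: IH.
by apply: contraNneq ne => ->; rewrite exy.
Qed.

Section SetLexOrder.
Variable r : nat.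
Implicit Types S T X : {set 'I_r}.

Lemma set_lexlt_asym S T : set_lexlt S T -> set_lexlt T S = false.
Proof.
rewrite /set_lexlt => /orP[lt|/andP[/eqP-> st]].
  by rewrite ltnNge (ltnW lt) eq_sym (ltn_eqF lt).
by rewrite ltnn eqxx seq_lexlt_asym.
Qed.

Lemma set_lexlt_trans S T X : set_lexlt S T -> set_lexlt T X -> set_lexlt S X.
Proof.
rewrite /set_lexlt => /orP[lt|/andP[/eqP-> st]] /orP[lt'|/andP[/eqP<- tx]].
- by rewrite (ltn_trans lt lt').
- by rewrite lt.
- by rewrite lt'.
- by rewrite eqxx (seq_lexlt_trans st tx) orbT.
Qed.

Lemma set_lexlt_total S T : S != T -> set_lexlt S T || set_lexlt T S.
Proof.
move=> neST; rewrite /set_lexlt; case: ltngtP => //= _.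
apply: seq_lexlt_total; apply: contraNneq neST => /(inj_map val_inj) eST.
by rewrite -(set_enum S) -(set_enum T) eST.
Qed.

Lemma set_lexlt_min (F : seq {set 'I_r}) : F != [::] ->
  exists2 S, S \in F & forall T, T \in F -> T = S \/ set_lexlt S T.
Proof.
elim: F => [|T0 F IH] // _; have [->|/IH[S SF Smin]] := eqVneq F [::].
  by exists T0 => [|T]; rewrite ?mem_head // inE => /eqP; left.
have [->|/set_lexlt_total/orP[lt|lt]] := eqVneq T0 S.
- exists S => [|T]; first exact: mem_head.
  by rewrite inE => /orP[/eqP->|/Smin]; [left|].
- exists T0 => [|T]; first exact: mem_head.
  rewrite inE => /orP[/eqP->|/Smin[->|]]; [by left|by right|].
  by right; apply: set_lexlt_trans lt _.
- exists S => [|T]; first by rewrite inE SF orbT.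
  by rewrite inE => /orP[/eqP->|/Smin]; [right|].
Qed.

End SetLexOrder.

Lemma firstv_some (T : eqType) r (nonneg : T -> bool) (supp : T -> {set 'I_r})
    (S : seq T) w :
    w \in S -> nonneg w ->
    (forall v, v \in S -> nonneg v -> v = w \/ set_lexlt (supp w) (supp v)) ->
  firstv nonneg supp S = Some w.
Proof.
move=> wS nw wmin; rewrite /firstv; set F := filter _ S.
have wF : w \in F.
  rewrite mem_filter nw wS andbT; apply/allP => v vS.
  by case: (boolP (nonneg v)) => //= nv; case: (wmin v vS nv) => ->; rewrite ?eqxx ?orbT.
have Fw x : x \in F -> x = w.
  rewrite mem_filter => /andP[/andP[nx /allP xmin] xS].
  case: (wmin x xS nx) => // lt; have := xmin w wS.
  by rewrite nw /= set_lexlt_asym // orbF => /eqP.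
by case: F wF Fw => [|x F] //= _ /(_ x (mem_head _ _))->.
Qed.

Lemma firstv_nonneg (T : eqType) r (nonneg : T -> bool) (supp : T -> {set 'I_r})
  (S : seq T) v : firstv nonneg supp S = Some v -> nonneg v.
Proof.
rewrite /firstv; set F := filter _ S.
have : all nonneg F by apply/allP => x; rewrite mem_filter => /andP[/andP[]].
by case: F => //= x F /andP[nx _] [<-].
Qed.

Lemma firstv_map (T T' : eqType) r (nonneg : T -> bool) (supp : T -> {set 'I_r})
    (nonneg' : T' -> bool) (supp' : T' -> {set 'I_r}) (f : T -> T') (S : seq T) :
    injective f -> nonneg' \o f =1 nonneg -> supp' \o f =1 supp ->
  firstv nonneg' supp' (map f S) = omap f (firstv nonneg supp S).
Proof.
move=> finj en es; rewrite /firstv filter_map.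
rewrite (@eq_filter _ _ [pred v | nonneg v && all (fun w =>
  ~~ nonneg w || (w == v) || set_lexlt (supp v) (supp w)) S]); first by case: filter.
move=> v /=; rewrite all_map -en; congr (_ && _); apply: eq_all => w /=.
by rewrite -[nonneg' (f w)]/((nonneg' \o f) w) en (inj_eq finj) -!es.
Qed.

Section NonnegMatrices.
Variable R : realType.

Lemma nonnegmxP a b (A : 'M[R]_(a, b)) : reflect (forall i j, 0 <= A i j) (nonnegmx A).
Proof.
apply: (iffP forallP) => [H i j|H i]; last by apply/forallP.
by have /forallP := H i; apply.
Qed.

Lemma nonnegmx_tr a b (A : 'M[R]_(a, b)) : nonnegmx A^T = nonnegmx A.
Proof.
apply/nonnegmxP/nonnegmxP => H i j; last by rewrite mxE.
by have := H j i; rewrite mxE.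
Qed.

Lemma nonnegmx_mul a b c (A : 'M[R]_(a, b)) (B : 'M[R]_(b, c)) :
  nonnegmx A -> nonnegmx B -> nonnegmx (A *m B).
Proof.
move=> /nonnegmxP nA /nonnegmxP nB; apply/nonnegmxP => i j; rewrite mxE.
by apply: sumr_ge0 => k _; apply: mulr_ge0.
Qed.

Lemma nonnegmx_col a b (A : 'M[R]_(a, b)) j : nonnegmx A -> nonnegmx (col j A).
Proof. by move=> /nonnegmxP nA; apply/nonnegmxP => i k; rewrite mxE. Qed.

Lemma rsupp_tr r (v : 'cV[R]_r) : rsupp v^T = csupp v.
Proof. by apply/setP => k; rewrite !inE mxE. Qed.

Lemma csuppP r (v : 'cV[R]_r) (T : {set 'I_r}) :
  reflect (forall k, k \notin T -> v k 0 = 0) (csupp v \subset T).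
Proof.
apply: (iffP subsetP) => [sT k|vT k]; last by rewrite inE; apply: contraNT => /vT->.
by apply: contraNeq => vk; apply: sT; rewrite inE.
Qed.

Lemma csuppB r (v w : 'cV[R]_r) (T : {set 'I_r}) :
  csupp v \subset T -> csupp w \subset T -> csupp (v - w) \subset T.
Proof.
by move=> /csuppP vT /csuppP wT; apply/csuppP => k kT; rewrite !mxE vT ?wT ?subrr.
Qed.

Lemma csupp_delta r (j : 'I_r) : csupp (delta_mx j 0 : 'cV[R]_r) = [set j].
Proof.
by apply/setP => k; rewrite !inE mxE eqxx andbT; case: (k == j); rewrite ?oner_eq0 ?eqxx.
Qed.

End NonnegMatrices.

Section Selection.
Variables (R : realType) (r : nat) (T : {set 'I_r}).

Definition selmx : 'M[R]_(#|T|, r) := \matrix_(a, b) (enum_val a == b)%:R.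

Lemma selmx_mul (v : 'cV[R]_r) a : (selmx *m v) a 0 = v (enum_val a) 0.
Proof.
rewrite mxE (bigD1 (enum_val a)) //= big1 => [|b /negPf nb]; rewrite mxE.
  by rewrite eqxx mul1r addr0.
by rewrite eq_sym nb mul0r.
Qed.

Lemma selmx_tr_mul (y : 'cV[R]_#|T|) b (bT : b \in T) :
  (selmx^T *m y) b 0 = y (enum_rank_in bT b) 0.
Proof.
rewrite mxE (bigD1 (enum_rank_in bT b)) //= big1 => [|a na]; rewrite !mxE.
  by rewrite enum_rankK_in // eqxx mul1r addr0.
case: eqP => [eab|]; last by rewrite mul0r.
by case/eqP: na; apply: enum_val_inj; rewrite eab enum_rankK_in.
Qed.

Lemma csupp_selmx_tr (y : 'cV[R]_#|T|) : csupp (selmx^T *m y) \subset T.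
Proof.
apply/csuppP => b bT; rewrite mxE big1 // => a _; rewrite !mxE.
by case: eqP => [eab|]; [move: (enum_valP a); rewrite eab (negPf bT)|rewrite mul0r].
Qed.

Lemma selmxK (v : 'cV[R]_r) : csupp v \subset T -> selmx^T *m (selmx *m v) = v.
Proof.
move=> /csuppP vT; apply/colP => b; case: (boolP (b \in T)) => bT.
  by rewrite selmx_tr_mul selmx_mul enum_rankK_in.
by rewrite vT //; move/csuppP: (csupp_selmx_tr (selmx *m v)) => ->.
Qed.

Lemma selmx_trK (y : 'cV[R]_#|T|) : selmx *m (selmx^T *m y) = y.
Proof. by apply/colP => a; rewrite selmx_mul (selmx_tr_mul _ (enum_valP a)) enum_valK_in. Qed.

End Selection.

Lemma col_mulmx (R : realType) a b c (A : 'M[R]_(a, b)) (B : 'M[R]_(b, c)) j :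
  col j (A *m B) = A *m col j B.
Proof. by rewrite !colE mulmxA. Qed.

Lemma col_matrixP (R : realType) a b (A B : 'M[R]_(a, b)) :
  (forall j, col j A = col j B) -> A = B.
Proof. by move=> eqAB; apply/trmx_inj/row_matrixP => j; rewrite -!tr_col eqAB. Qed.

Section IndependentColumns.
Variables (R : realType) (s r : nat) (K : 'M[R]_(s, r)).
Implicit Types (T : {set 'I_r}) (d v w : 'cV[R]_r).

Local Notation sel T := (selmx R T).

Definition indep_cols T : bool := row_free (K *m (sel T)^T)^T.

Lemma indep_cols_eq0 T d : indep_cols T -> csupp d \subset T -> K *m d = 0 -> d = 0.
Proof.
move=> iT dT Kd; have : (sel T *m d)^T *m (K *m (sel T)^T)^T = 0.
  by rewrite -trmx_mul -mulmxA selmxK // Kd trmx0.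
move/eqP; rewrite mulmx_free_eq0 // => /eqP z.
by rewrite -(selmxK dT) -[sel T *m d]trmxK z trmx0 mulmx0.
Qed.

Lemma indep_colsPn T :
  reflect (exists d, [/\ csupp d \subset T, K *m d = 0 & d != 0]) (~~ indep_cols T).
Proof.
apply: (iffP idP) => [|[d [dT Kd]]]; last first.
  by apply: contraNN => iT; apply/eqP; apply: indep_cols_eq0 iT dT Kd.
rewrite /indep_cols -kermx_eq0 => /matrix0Pn[i [j kij]].
pose z := row i (kermx (K *m (sel T)^T)^T); have zK : z *m (K *m (sel T)^T)^T = 0.
  by rewrite -row_mul mulmx_ker row0.
exists ((sel T)^T *m z^T); split; first exact: csupp_selmx_tr.
  by rewrite mulmxA -[_ *m z^T]trmxK trmx_mul trmxK zK trmx0.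
apply: contraNneq kij => /(congr1 (mulmx (sel T))); rewrite selmx_trK mulmx0.
by move/(congr1 (fun y : 'cV_#|T| => y j 0)); rewrite !mxE => ->.
Qed.

Lemma indep_cols0 : indep_cols set0.
Proof.
apply/negPn/indep_colsPn => -[d [/csuppP d0 _]]; apply/negP; rewrite negbK.
by apply/eqP/colP => k; rewrite d0 ?inE // mxE.
Qed.

Lemma indep_cols_card T : indep_cols T -> (#|T| <= s)%N.
Proof. by move=> /eqP <-; apply: rank_leq_col. Qed.

Lemma eq_indep_cols T v w : indep_cols T -> csupp v \subset T -> csupp w \subset T ->
  K *m v = K *m w -> v = w.
Proof.
move=> iT vT wT eK; apply/eqP; rewrite -subr_eq0; apply/eqP/(indep_cols_eq0 iT).
  exact: csuppB.
by rewrite mulmxBr eK subrr.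
Qed.

(* A kernel vector supported in [j |: T] must involve [j], and can be solved for column [j]. *)
Lemma indep_cols_span T j : indep_cols T -> ~~ indep_cols (j |: T) ->
  exists2 y, csupp y \subset T & K *m y = col j K.
Proof.
move=> iT /indep_colsPn[d [/csuppP djT Kd nd]].
have dj : d j 0 != 0.
  apply: contra nd => /eqP dj0; apply/eqP/(indep_cols_eq0 iT) => //.
  apply/csuppP => k kT; have [->|njk] := eqVneq k j; first by [].
  by apply: djT; rewrite !inE negb_or njk.
exists (delta_mx j 0 - (d j 0)^-1 *: d); last first.
  by rewrite mulmxBr -scalemxAr Kd scaler0 subr0 colE.
apply/csuppP => k kT; rewrite !mxE; have [->|njk] := eqVneq k j.
  by rewrite eqxx mulVf // subrr.
have dk : d k 0 = 0 by apply: djT; rewrite !inE negb_or njk.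
by rewrite dk mulr0 subr0.
Qed.

Lemma rank_le_span T : (forall j, exists2 y, csupp y \subset T & K *m y = col j K) ->
  (\rank K <= #|T|)%N.
Proof.
move=> /fin_all_exists2[f fT fK]; pose Y : 'M[R]_r := \matrix_(b, j) f j b 0.
have colY j : col j Y = f j by apply/colP => b; rewrite !mxE.
have KY : K = (K *m (sel T)^T) *m (sel T *m Y).
  by apply/col_matrixP => j; rewrite -mulmxA !col_mulmx colY selmxK.
by rewrite {1}KY; apply: leq_trans (mxrankM_maxl _ _) (rank_leq_col _).
Qed.

Lemma indep_cols_extend T : row_free K -> indep_cols T ->
  exists T', [/\ T \subset T', #|T'| = s & indep_cols T'].
Proof.
move=> Kfree iT.
have [T' /andP[TT' iT'] T'max] :=
  @arg_maxnP _ T (fun X => (T \subset X) && indep_cols X) (fun X => #|X|)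
    (introT andP (conj (subxx T) iT)).
exists T'; split=> //; apply/eqP; rewrite eqn_leq indep_cols_card //= -(eqP Kfree).
apply: rank_le_span => j; have [ijT'|] := boolP (indep_cols (j |: T')).
  exists (delta_mx j 0); last by rewrite colE.
  rewrite csupp_delta sub1set; apply: contraT => jT'; have /= := T'max (j |: T').
  by rewrite ijT' (subset_trans TT' (subsetUr _ _)) cardsU1 jT' add1n ltnn; apply.
exact: indep_cols_span.
Qed.

End IndependentColumns.

Section BasicSolutions.
Variables (R : realType) (s r : nat) (K : 'M[R]_(s, r)).
Implicit Types (T : {set 'I_r}) (v : 'cV[R]_r) (x : 'cV[R]_s).

Local Notation sel T := (selmx R T).

Definition bases := [set T : {set 'I_r} | (#|T| == s) && indep_cols K T].

Definition basic_inv T : 'M[R]_(r, s) := (sel T)^T *m pinvmx (K *m (sel T)^T).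

Lemma mulmx_basic_inv T : T \in bases -> K *m basic_inv T = 1%:M.
Proof.
rewrite inE => /andP[/eqP cT iT]; rewrite mulmxA mulmxVp //.
by rewrite /row_free -mxrank_tr (eqP iT) cT.
Qed.

Lemma csupp_basic_inv T x : csupp (basic_inv T *m x) \subset T.
Proof. by rewrite -mulmxA csupp_selmx_tr. Qed.

Lemma bases_gt0 : row_free K -> (0 < #|bases|)%N.
Proof.
move=> Kfree; have [T [_ cT iT]] := indep_cols_extend Kfree (indep_cols0 K).
by apply/card_gt0P; exists T; rewrite inE cT eqxx.
Qed.

Lemma bases_le_bin : (#|bases| <= 'C(r, s))%N.
Proof.
rewrite -[X in 'C(X, _)]card_ord -card_draws; apply: subset_leq_card.
by apply/subsetP => T; rewrite !inE => /andP[].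
Qed.

Definition basic_invs : 'I_#|bases| -> 'M[R]_(r, s) := fun k => basic_inv (enum_val k).

Definition basic_solutions x : seq 'cV[R]_r :=
  [seq basic_invs k *m x | k <- enum 'I_#|bases|].

Lemma basic_solutionsP x v :
  reflect (exists2 T, T \in bases & v = basic_inv T *m x) (v \in basic_solutions x).
Proof.
apply: (iffP mapP) => [[k _ ->]|[T TB ->]].
  by exists (enum_val k) => //; apply: enum_valP.
by exists (enum_rank_in TB T); rewrite ?mem_enum // /basic_invs enum_rankK_in.
Qed.

Lemma basic_solutions_sol x v : v \in basic_solutions x -> K *m v = x.
Proof. by case/basic_solutionsP => T TB ->; rewrite mulmxA mulmx_basic_inv // mul1mx. Qed.

(* Ratio test: move from [v] along the kernel direction [d] until a coordinate vanishes. *)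
Lemma nonneg_support_reduce v d : nonnegmx v -> d != 0 -> K *m d = 0 ->
    csupp d \subset csupp v ->
  exists u, [/\ nonnegmx u, K *m u = K *m v & csupp u \proper csupp v].
Proof.
move=> /nonnegmxP nv; wlog [k dk] : d / exists k, 0 < d k 0.
  move=> gen nd Kd dv; case/matrix0Pn: (nd) => k [j]; rewrite [j]ord1 {j}.
  case: (ltrgtP (d k 0) 0) => [dk|dk|] // _.
    apply: (gen (- d)); rewrite ?oppr_eq0 ?mulmxN ?Kd ?oppr0 //.
      by exists k; rewrite mxE oppr_gt0.
    by apply: subset_trans dv; apply/subsetP => b; rewrite !inE mxE oppr_eq0.
  by apply: (gen d) => //; exists k.
move=> _ Kd /subsetP dv.
have [k0 dk0 k0min] := @arg_minP _ _ _ k (fun k => 0 < d k 0) (fun k => v k 0 / d k 0) dk.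
pose l := v k0 0 / d k0 0; have l0 : 0 <= l by rewrite divr_ge0 // ltW.
exists (v - l *: d); split.
- apply/nonnegmxP => b j; rewrite [j]ord1 !mxE subr_ge0.
  have [db|db] := ltrP 0 (d b 0); first by rewrite -ler_pdivlMr // k0min.
  by apply: le_trans (nv b 0); apply: mulr_ge0_le0.
- by rewrite mulmxBr -scalemxAr Kd scaler0 subr0.
apply/properP; split.
  apply/subsetP => b; rewrite !inE !mxE; apply: contraNneq => vb.
  have [db|db] := eqVneq (d b 0) 0; first by rewrite vb db mulr0 subr0.
  by have := dv b; rewrite !inE db vb eqxx => /(_ isT).
exists k0; first by apply: dv; rewrite inE lt0r_neq0.
by rewrite inE negbK !mxE /l divfK ?subrr // lt0r_neq0.
Qed.

Lemma nonneg_indep_solution v : nonnegmx v ->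
  exists u, [/\ nonnegmx u, K *m u = K *m v & indep_cols K (csupp u)].
Proof.
have [n] := ubnP #|csupp v|; elim: n v => // n IH v; rewrite ltnS => cv nv.
have [iv|/indep_colsPn[d [dv Kd nd]]] := boolP (indep_cols K (csupp v)); first by exists v.
have [u [nu Ku /proper_card uv]] := nonneg_support_reduce nv nd Kd dv.
by have [w [nw Kw iw]] := IH u (leq_trans uv cv) nu; exists w; rewrite Kw Ku.
Qed.

Lemma nonneg_basic_solution x v : row_free K -> nonnegmx v -> K *m v = x ->
  exists2 u, u \in basic_solutions x & nonnegmx u.
Proof.
move=> Kfree nv Kv; have [u [nu Ku iu]] := nonneg_indep_solution nv.
have [T [uT cT iT]] := indep_cols_extend Kfree iu.
have TB : T \in bases by rewrite inE cT eqxx.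
exists u => //; apply/basic_solutionsP; exists T => //.
apply: (eq_indep_cols iT) => //; first exact: csupp_basic_inv.
by rewrite mulmxA mulmx_basic_inv // mul1mx Ku.
Qed.

Lemma firstv_basic_solutions x v : row_free K -> nonnegmx v -> K *m v = x ->
  exists w, firstv (@nonnegmx R r 1) (@csupp R r) (basic_solutions x) = Some w /\ K *m w = x.
Proof.
move=> Kfree nv Kv; set L := basic_solutions x.
have [u uL nu] := nonneg_basic_solution Kfree nv Kv.
have uF : u \in [seq u <- L | nonnegmx u] by rewrite mem_filter nu.
have /set_lexlt_min[_ /mapP[w wF ->] wmin] : [seq csupp v | v <- L & nonnegmx v] != [::].
  by case: filter uF.
move: wF; rewrite mem_filter => /andP[nw wL].
exists w; split; last exact: basic_solutions_sol.
apply: firstv_some => // v' v'L nv'.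
have /wmin[ev'w|] : csupp v' \in [seq csupp v | v <- L & nonnegmx v]; last by right.
  by rewrite map_f // mem_filter nv'.
left; case/basic_solutionsP: (wL) => T; rewrite inE => /andP[_ iT] wE.
apply: (eq_indep_cols iT); rewrite ?ev'w wE ?csupp_basic_inv //.
by rewrite -wE (basic_solutions_sol v'L) (basic_solutions_sol wL).
Qed.

End BasicSolutions.

Section Factorizations.
Variable R : realType.

Definition rowsmx m r (U : {set 'I_m}) (A : 'M[R]_(m, r)) : 'M[R]_(#|U|, r) :=
  \matrix_(k, b) A (enum_val k) b.

Lemma colU_mulmx m n r (A : 'M[R]_(m, r)) (W : 'M[R]_(r, n)) U i :
  colU (A *m W) U i = rowsmx U A *m col i W.
Proof. by apply/colP => k; rewrite !mxE; apply: eq_bigr => b _; rewrite !mxE. Qed.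

Lemma row_basis_subset m r (A : 'M[R]_(m, r)) :
  exists U : {set 'I_m}, row_free (rowsmx U A) /\ (A <= rowsmx U A)%MS.
Proof.
pose f := maxrankfun A; pose U := [set f k | k in 'I_(\rank A)].
have sAU : (A <= rowsmx U A)%MS.
  rewrite -(eq_maxrowsub A); apply/row_subP => k.
  have fkU : f k \in U by apply/imsetP; exists k.
  by apply: (eq_row_sub (enum_rank_in fkU (f k))); apply/rowP => b; rewrite !mxE enum_rankK_in.
exists U; split => //.
have cU : #|U| = \rank A by rewrite card_imset ?card_ord //; apply: maxrankfun_inj.
by rewrite /row_free eqn_leq rank_leq_row /= {1}cU mxrankS.
Qed.

Lemma nnfactW m n (M : 'M[R]_(m, n)) k r : nnfact M k -> (k <= r)%N -> nnfact M r.
Proof.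
move=> [A [W [nA nW MAW]]] kr; pose E : 'M[R]_(k, r) := pid_mx k.
have nE : nonnegmx E by apply/nonnegmxP => a b; rewrite mxE ler0n.
exists (A *m E), (E^T *m W); split; rewrite ?nonnegmx_mul ?nonnegmx_tr //.
by rewrite mulmxA -(mulmxA A) tr_pid_mx pid_mx_id // pid_mx_1 mulmx1.
Qed.

Lemma nnrank_leP m n (M : 'M[R]_(m, n)) (HM : nonnegmx M) r :
  (nnrank HM <= r)%N <-> nnfact M r.
Proof.
rewrite /nnrank; case: ex_minnP => k /asboolP Mk kmin.
by split => [/(nnfactW Mk)//|Mr]; apply: kmin; apply/asboolP.
Qed.

Lemma Wcol_factor m n r (M : 'M[R]_(m, n)) (A : 'M[R]_(m, r)) (W : 'M[R]_(r, n)) :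
    nonnegmx W -> M = A *m W ->
  exists (U : {set 'I_m}) p (B : 'I_p -> 'M[R]_(r, #|U|)) (W' : 'M[R]_(r, n)),
    [/\ (#|U| <= r)%N, (0 < p)%N, (p <= 'C(r, #|U|))%N, M = A *m W' &
        forall i, Wcol M B i = Some (col i W')].
Proof.
move=> nW MAW; have [U [Kfree /submxP[Z AZ]]] := row_basis_subset A.
set K := rowsmx U A in Kfree AZ.
have MK i : colU M U i = K *m col i W by rewrite MAW colU_mulmx.
have [f Hf] := fin_all_exists (fun i =>
  firstv_basic_solutions Kfree (nonnegmx_col i nW) (esym (MK i))).
pose W' := \matrix_(b, i) f i b 0.
have colW' i : col i W' = f i by apply/colP => b; rewrite !mxE.
exists U, #|bases K|, (@basic_invs _ _ _ K), W'; split.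
- by move/eqP: Kfree => <-; apply: rank_leq_col.
- exact: bases_gt0.
- exact: bases_le_bin.
- apply/col_matrixP => i; rewrite col_mulmx colW' AZ -mulmxA (Hf i).2 MK.
  by rewrite mulmxA -AZ -col_mulmx -MAW.
- by move=> i; rewrite colW'; exact: (Hf i).1.
Qed.

Lemma Arow_trmx m n r (M : 'M[R]_(m, n)) (V : {set 'I_n}) q (B : 'I_q -> 'M[R]_(r, #|V|)) j :
  Arow M (fun l => (B l)^T) j = omap trmx (Wcol M^T B j).
Proof.
rewrite /Arow /Wcol; have -> : [seq rowV M V j *m (B l)^T | l <- enum 'I_q] =
    map trmx [seq B l *m colU M^T V j | l <- enum 'I_q].
  rewrite -map_comp; apply: eq_map => l /=; rewrite trmx_mul.
  by congr (_ *m _); apply/rowP => k; rewrite !mxE.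
apply: firstv_map; first exact: trmx_inj.
- by move=> v /=; rewrite nonnegmx_tr.
- exact: rsupp_tr.
Qed.

Lemma testP_factor m n r (M : 'M[R]_(m, n)) (U : {set 'I_m}) (V : {set 'I_n}) p q
    (B : 'I_p -> 'M[R]_(r, #|U|)) (C : 'I_q -> 'M[R]_(#|V|, r))
    (A : 'M[R]_(m, r)) (W : 'M[R]_(r, n)) :
    M = A *m W -> (forall i, Wcol M B i = Some (col i W)) ->
    (forall j, Arow M C j = Some (row j A)) ->
  testP M B C.
Proof.
move=> MAW HW HA; apply/andP; split; first (apply/andP; split).
- by apply/forallP => i; rewrite HW.
- by apply/forallP => j; rewrite HA.
apply/forallP => i; apply/forallP => j; rewrite HA HW MAW !mxE.
by apply/eqP/eq_bigr => k _; rewrite !mxE.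
Qed.

Lemma testP_nnfact m n r (M : 'M[R]_(m, n)) (U : {set 'I_m}) (V : {set 'I_n}) p q
    (B : 'I_p -> 'M[R]_(r, #|U|)) (C : 'I_q -> 'M[R]_(#|V|, r)) :
  testP M B C -> nnfact M r.
Proof.
move=> /andP[/andP[_ _] /forallP HM].
pose A : 'M[R]_(m, r) := \matrix_(j, b) (odflt 0 (Arow M C j)) 0 b.
pose W : 'M[R]_(r, n) := \matrix_(b, i) (odflt 0 (Wcol M B i)) b 0.
exists A, W; split.
- apply/nonnegmxP => j b; rewrite mxE.
  by case E: Arow => [a|]; rewrite ?mxE //; move/firstv_nonneg/nonnegmxP: E; apply.
- apply/nonnegmxP => b i; rewrite mxE.
  by case E: Wcol => [w|]; rewrite ?mxE //; move/firstv_nonneg/nonnegmxP: E; apply.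
apply/matrixP => j i; have /forallP/(_ j) := HM i.
case EA: Arow => [a|] //; case EW: Wcol => [w|] //= /eqP <-.
by rewrite !mxE; apply: eq_bigr => b _; rewrite !mxE EA EW.
Qed.

End Factorizations.

Theorem mainTheorem8 (R : realType) (m n r : nat) (M : 'M[R]_(m, n))
    (HM : nonnegmx M) (Hr : (0 < r)%N) :
  (nnrank HM <= r)%N <->
  exists (s t : nat), [/\ (s <= r)%N, (t <= r)%N &
    exists (U : {set 'I_m}) (V : {set 'I_n}), [/\ #|U| = s, #|V| = t &
      exists (p q : nat), [/\ (0 < p)%N, (p <= 'C(r, s))%N, (0 < q)%N,
        (q <= 'C(r, t))%N &
        exists (B : 'I_p -> 'M[R]_(r, #|U|)) (C : 'I_q -> 'M[R]_(#|V|, r)),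
          testP M B C]]].
Proof.
split=> [/nnrank_leP[A [W [nA nW MAW]]]|]; last first.
  by case=> s [t [_ _ [U [V [_ _ [p [q [_ _ _ _ [B [C /testP_nnfact]]]]]]]]]] /nnrank_leP.
have [U [p [B [W' [Ur p0 pC MAW' HW]]]]] := Wcol_factor nW MAW.
have MtW' : M^T = W'^T *m A^T by rewrite MAW' trmx_mul.
have nAt : nonnegmx A^T by rewrite nonnegmx_tr.
have [V [q [B' [A' [Vr q0 qC MtA' HA]]]]] := Wcol_factor nAt MtW'.
exists #|U|, #|V|; split => //; exists U, V; split => //; exists p, q; split => //.
exists B, (fun l => (B' l)^T); apply: (testP_factor (A := A'^T) (W := W')) => //.
- by rewrite -[M]trmxK MtA' trmx_mul trmxK.
- by move=> j; rewrite Arow_trmx HA /= tr_col.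
Qed.
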